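(* Let $\epsilon\in[0,1)$ and $\theta=\arcsin\!\big(3-\sqrt{4\epsilon+5}\big)$, $s:=\sin\theta$. Consider the two-qubit state $|\psi_\theta\rangle=\cos(\theta/2)|00\rangle-\sin(\theta/2)|11\rangle$ and the observables $$A_0=B_0=\frac{-(2+s)\sqrt{1-s}}{(2-s)\sqrt{1+s}}\,\sigma_z-\frac{\sqrt2\,s^{3/2}}{(2-s)\sqrt{1+s}}\,\sigma_x,\qquad A_1=B_1=-\sqrt{\frac{1-s}{1+s}}\,\sigma_z+\sqrt{\frac{2s}{1+s}}\,\sigma_x .$$ Define $p(ab|xy)=\langle\psi_\theta|\Pi^{a}_{A_x}\otimes\Pi^{b}_{B_y}|\psi_\theta\rangle$ with $\Pi^{a}_{O}=\tfrac12(\mathbb{1}+(-1)^aO)$. Then $p(01|01)=p(10|10)=p(00|11)=0$ and $$p(00|00)+\epsilon\,p(11|00)=\frac{(4\epsilon+5)\sqrt{4\epsilon+5}-(12\epsilon+11)}{2(1+\epsilon)}>\epsilon,$$ so that $(1-\epsilon)p(00|00)+\epsilon(1-\epsilon)p(11|00)-p(01|01)-p(10|10)-p(00|11)>\epsilon(1-\epsilon)$. In particular $p\notin\mathcal{P}_2^{AB,(\epsilon,\epsilon)}$.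
   Context: $\sigma_x,\sigma_z$ are the Pauli matrices; each observable above is a $\pm1$-valued qubit observable (unit Bloch vector). $\mathcal{P}_2^{AB,(\epsilon,\epsilon)}$ (for inputs and outputs in $\{0,1\}$) is the set of conditional distributions $p(ab|xy)=\int q(d\lambda)p_A(a|xy\lambda)p_B(b|xy\lambda)$, where $(\Lambda,q)$ is a probability space and $p_A(\cdot|x,y,\lambda),p_B(\cdot|x,y,\lambda)$ are distributions on $\{0,1\}$ satisfying $\frac12\sum_a|p_A(a|xy\lambda)-p_A(a|xy'\lambda)|\le\epsilon$ for all $x,y,y',\lambda$ and $\frac12\sum_b|p_B(b|xy\lambda)-p_B(b|x'y\lambda)|\le\epsilon$ for all $y,x,x',\lambda$. *)

From HB Require Import structures.
From mathcomp Require Import all_boot all_order all_algebra.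
From mathcomp Require Import all_classical all_reals all_analysis.
From mathcomp Require Import mxtens.
Set Implicit Arguments. Unset Strict Implicit. Unset Printing Implicit Defensive.
Import Order.TTheory GRing.Theory Num.Theory.
Local Open Scope ring_scope.
Local Open Scope classical_set_scope.

Section Defs.
Variable R : realType.

(* Pauli matrices (real ones suffice here). *)
Definition sigma_z : 'M[R]_2 := \matrix_(i, j) (if i == j then (-1) ^+ (val i) else 0).
Definition sigma_x : 'M[R]_2 := \matrix_(i, j) (if i == j then 0 else 1).

Definition ket (k : 'I_2) : 'cV[R]_2 := delta_mx k 0.

Definition ket2 (a b : 'I_2) : 'cV[R]_(2 * 2) := tensmx (ket a) (ket b).

Definition proj (a : bool) (O : 'M[R]_2) : 'M[R]_2 :=
  2^-1 *: (1%:M + ((-1) ^+ a) *: O).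

Definition expect (psi : 'cV[R]_(2 * 2)) (M : 'M[R]_(2 * 2)) : R :=
  (psi^T *m M *m psi) 0 0.

Definition born (psi : 'cV[R]_(2 * 2)) (A B : bool -> 'M[R]_2)
  (a b x y : bool) : R :=
  expect psi (tensmx (proj a (A x)) (proj b (B y))).

(* The set P_2^{AB,(eA,eB)} of the paper: local models with eA/eB-relaxed
   measurement dependence (signalling), over a probability space. *)
Definition P2 (eA eB : R) (p : bool -> bool -> bool -> bool -> R) : Prop :=
  exists (d : measure_display) (L : measurableType d) (q : probability L R)
         (pA pB : bool -> bool -> bool -> L -> R),
    (forall a x y, measurable_fun setT (pA a x y)) /\
    (forall b x y, measurable_fun setT (pB b x y)) /\
    (forall a x y l, 0 <= pA a x y l) /\ (forall x y l, pA false x y l + pA true x y l = 1) /\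
    (forall b x y l, 0 <= pB b x y l) /\ (forall x y l, pB false x y l + pB true x y l = 1) /\
    (forall x y y' l, 2^-1 * (`|pA false x y l - pA false x y' l| + `|pA true x y l - pA true x y' l|) <= eA) /\
    (forall y x x' l, 2^-1 * (`|pB false x y l - pB false x' y l| + `|pB true x y l - pB true x' y l|) <= eB) /\
    (forall a b x y, (p a b x y)%:E = (\int[q]_l (pA a x y l * pB b x y l)%:E)%E).

End Defs.

Arguments sigma_z {R}.
Arguments sigma_x {R}.
Arguments ket {R}.
Arguments ket2 {R}.
Arguments proj {R}.
Arguments expect {R}.
Arguments born {R}.
Arguments P2 {R}.

From Pilot Require Import Defs.
From HB Require Import structures.
From mathcomp Require Import all_boot all_order all_algebra.
From mathcomp Require Import all_classical all_reals all_analysis.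
From mathcomp Require Import mxtens measurable_realfun ring lra.
Import Order.TTheory GRing.Theory Num.Theory.
Local Open Scope ring_scope.

(* For the state cos(t/2)|00> - sin(t/2)|11> and real observables z sigma_z + x sigma_x,
   p(ab|xy) = (1 + (-1)^a z_x cos t + (-1)^b z_y cos t + (-1)^(a+b) (z_x z_y - sin t x_x x_y)) / 4.
   With s = sin t = 3 - sqrt(4 eps + 5) the chosen Bloch vectors make p(01|01), p(10|10) and
   p(00|11) vanish, while p(00|00) + eps p(11|00) - eps = s^3 / (4 (2 - s)) > 0.
   Conversely, the inequality holds for every model in P_2^(eps,eps), pointwise in lambda:
   lowering each response probability by eps (clipped at 0) to A, B, U, V removes the dependence
   on the other party's input, and then (1 - eps) min(A, B) <= A (1 - eps - U) + B (1 - eps - V) + U V;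
   integrating over lambda gives the bound eps (1 - eps). *)

Lemma sum_mxtens (V : nmodType) m n (F : 'I_(m * n) -> V) :
  \sum_k F k = \sum_i \sum_j F (mxtens_index (i, j)).
Proof.
rewrite pair_big (reindex (@mxtens_index m n)) /=; last first.
  by exists (@mxtens_unindex m n) => x _; rewrite (mxtens_indexK, mxtens_unindexK).
by apply: eq_bigr => -[i j].
Qed.

Lemma expectE (R : realType) (psi : 'cV[R]_(2 * 2)) M :
  expect psi M = \sum_j \sum_i psi i 0 * M i j * psi j 0.
Proof.
rewrite /expect mxE; apply: eq_bigr => j _; rewrite mxE big_distrl /=.
by apply: eq_bigr => i _; rewrite mxE.
Qed.

Lemma schmidt_stateE (R : realType) (c d : R) i j :
  (c *: ket2 0 0 - d *: ket2 1 1) (mxtens_index (i, j)) 0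
   = c * ((i == 0)%:R * (j == 0)%:R) - d * ((i == 1)%:R * (j == 1)%:R).
Proof.
have E : forall x : 'I_1, (x == 0) = true by move=> x; rewrite (ord1 x).
by rewrite !mxE !mxtens_indexK /= !E !andbT.
Qed.

Lemma expect_schmidt_proj (R : realType) (c d za xa zb xb : R) (a b : bool) :
  expect (c *: ket2 0 0 - d *: ket2 1 1)
    (Defs.proj a (za *: sigma_z + xa *: sigma_x) *t Defs.proj b (zb *: sigma_z + xb *: sigma_x))
  = 4^-1 * (c ^+ 2 + d ^+ 2 + (-1) ^+ a * za * (c ^+ 2 - d ^+ 2)
       + (-1) ^+ b * zb * (c ^+ 2 - d ^+ 2)
       + (-1) ^+ a * (-1) ^+ b * ((c ^+ 2 + d ^+ 2) * za * zb - 2 * c * d * xa * xb)).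
Proof.
rewrite expectE sum_mxtens.
under eq_bigr => i _ do under eq_bigr => j _ do rewrite sum_mxtens.
rewrite !big_ord_recr !big_ord0 /= !add0r !tensmxE !schmidt_stateE.
rewrite /Defs.proj /sigma_z /sigma_x !mxE /=.
by case: a; case: b; rewrite /= ?expr0 ?expr1; field; rewrite ?pnatr_eq0.
Qed.

Lemma expect_schmidt_angle (R : realType) (t za xa zb xb : R) (a b : bool) :
  expect (cos (t / 2) *: ket2 0 0 - sin (t / 2) *: ket2 1 1)
    (Defs.proj a (za *: sigma_z + xa *: sigma_x) *t Defs.proj b (zb *: sigma_z + xb *: sigma_x))
  = 4^-1 * (1 + (-1) ^+ a * (za * cos t) + (-1) ^+ b * (zb * cos t)
       + (-1) ^+ a * (-1) ^+ b * (za * zb - sin t * (xa * xb))).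
Proof.
have ht : t = t / 2 + t / 2 by rewrite -splitr.
rewrite expect_schmidt_proj cos2Dsin2 [in RHS]ht cosD sinD; ring.
Qed.

Definition obs0_z {R : realType} (s : R) :=
  - ((2 + s) * Num.sqrt (1 - s)) / ((2 - s) * Num.sqrt (1 + s)).
Definition obs0_x {R : realType} (s : R) :=
  - (Num.sqrt 2 * Num.sqrt s ^+ 3 / ((2 - s) * Num.sqrt (1 + s))).
Definition obs1_z {R : realType} (s : R) := - Num.sqrt ((1 - s) / (1 + s)).
Definition obs1_x {R : realType} (s : R) := Num.sqrt (2 * s / (1 + s)).

Definition obs_z {R : realType} (s : R) (x : bool) := if x then obs1_z s else obs0_z s.
Definition obs_x {R : realType} (s : R) (x : bool) := if x then obs1_x s else obs0_x s.

Definition schmidt_prob {R : realType} (s : R) (a b x y : bool) : R :=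
  4^-1 * (1 + (-1) ^+ a * (obs_z s x * Num.sqrt (1 - s ^+ 2))
    + (-1) ^+ b * (obs_z s y * Num.sqrt (1 - s ^+ 2))
    + (-1) ^+ a * (-1) ^+ b * (obs_z s x * obs_z s y - s * (obs_x s x * obs_x s y))).

Section Observables.
Context {R : realType} {s : R}.
Hypotheses (s_gt0 : 0 < s) (s_lt1 : s < 1).

Let m : R := Num.sqrt (1 - s).
Let n : R := Num.sqrt (1 + s).
Let t : R := Num.sqrt s.
Let w : R := Num.sqrt (2 : R).

Let one_sub_ge0 : 0 <= 1 - s. Proof. by rewrite subr_ge0 ltW. Qed.
Let one_add_gt0 : 0 < 1 + s. Proof. exact: addr_gt0. Qed.

Let m2 : m ^+ 2 = 1 - s. Proof. exact: sqr_sqrtr. Qed.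
Let n2 : n ^+ 2 = 1 + s. Proof. by rewrite sqr_sqrtr // ltW. Qed.
Let t2 : t ^+ 2 = s. Proof. by rewrite sqr_sqrtr // ltW. Qed.
Let w2 : w ^+ 2 = 2. Proof. by rewrite sqr_sqrtr. Qed.
Let n_neq0 : n != 0. Proof. by rewrite sqrtr_eq0 -ltNge. Qed.
Let two_sub_neq0 : 2 - s != 0. Proof. by rewrite subr_eq0 gt_eqF // (lt_trans s_lt1) // ltr1n. Qed.

Let obs0_zE : obs0_z s = - ((2 + s) * m) / ((2 - s) * n). Proof. by []. Qed.
Let obs0_xE : obs0_x s = - (w * t ^+ 3 / ((2 - s) * n)). Proof. by []. Qed.
Let obs1_zE : obs1_z s = - (m / n). Proof. by rewrite /obs1_z sqrtrM // sqrtrV // ltW. Qed.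
Let obs1_xE : obs1_x s = w * t / n. Proof. by rewrite /obs1_x !sqrtrM ?mulr_ge0 // ?sqrtrV // ltW. Qed.
Let cosE : Num.sqrt (1 - s ^+ 2) = m * n.
Proof. by rewrite -sqrtrM //; congr Num.sqrt; ring. Qed.

Lemma obs0_marginal : obs0_z s * Num.sqrt (1 - s ^+ 2) = - ((2 + s) * (1 - s)) / (2 - s).
Proof. by rewrite obs0_zE cosE -m2; field; apply/andP. Qed.

Lemma obs1_marginal : obs1_z s * Num.sqrt (1 - s ^+ 2) = - (1 - s).
Proof. by rewrite obs1_zE cosE -m2; field. Qed.

Lemma obs01_correlation :
  obs0_z s * obs1_z s - s * (obs0_x s * obs1_x s) = (2 * s ^+ 2 - 3 * s + 2) / (2 - s).
Proof.
have -> : obs0_z s * obs1_z s - s * (obs0_x s * obs1_x s)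
    = ((2 + s) * m ^+ 2 + s * w ^+ 2 * (t ^+ 2) ^+ 2) / ((2 - s) * n ^+ 2).
  by rewrite obs0_zE obs0_xE obs1_zE obs1_xE; field; apply/andP.
by rewrite m2 n2 t2 w2; field; rewrite two_sub_neq0 lt0r_neq0.
Qed.

Lemma obs0_correlation : obs0_z s * obs0_z s - s * (obs0_x s * obs0_x s) = 1 - 2 * s ^+ 3 / (2 - s) ^+ 2.
Proof.
have -> : obs0_z s * obs0_z s - s * (obs0_x s * obs0_x s)
    = ((2 + s) ^+ 2 * m ^+ 2 - s * w ^+ 2 * (t ^+ 2) ^+ 3) / ((2 - s) ^+ 2 * n ^+ 2).
  by rewrite obs0_zE obs0_xE; field; apply/andP.
by rewrite m2 n2 t2 w2; field; rewrite two_sub_neq0 lt0r_neq0.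
Qed.

Lemma obs1_correlation : obs1_z s * obs1_z s - s * (obs1_x s * obs1_x s) = 1 - 2 * s.
Proof.
have -> : obs1_z s * obs1_z s - s * (obs1_x s * obs1_x s) = (m ^+ 2 - s * w ^+ 2 * t ^+ 2) / n ^+ 2.
  by rewrite obs1_zE obs1_xE; field.
by rewrite m2 n2 t2 w2; field; rewrite lt0r_neq0.
Qed.

Lemma schmidt_prob0101 : schmidt_prob s false true false true = 0.
Proof.
rewrite /schmidt_prob /= obs0_marginal obs1_marginal obs01_correlation expr0 expr1.
by field.
Qed.

Lemma schmidt_prob1010 : schmidt_prob s true false true false = 0.
Proof.
rewrite /schmidt_prob /= obs0_marginal obs1_marginal.
by rewrite [obs1_z s * _]mulrC [obs1_x s * _]mulrC obs01_correlation expr0 expr1; field.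
Qed.

Lemma schmidt_prob0011 : schmidt_prob s false false true true = 0.
Proof. by rewrite /schmidt_prob /= obs1_marginal obs1_correlation expr0; field. Qed.

Lemma schmidt_prob0000_1100 (e : R) :
  schmidt_prob s false false false false + e * schmidt_prob s true true false false
  = 4^-1 * (1 + 2 * (- ((2 + s) * (1 - s)) / (2 - s)) + (1 - 2 * s ^+ 3 / (2 - s) ^+ 2))
  + e * (4^-1 * (1 - 2 * (- ((2 + s) * (1 - s)) / (2 - s)) + (1 - 2 * s ^+ 3 / (2 - s) ^+ 2))).
Proof. by rewrite /schmidt_prob /= obs0_marginal obs0_correlation; ring. Qed.

End Observables.

Lemma violation_value {R : realFieldType} {eps r s : R} :
  r ^+ 2 = 4 * eps + 5 -> 2 < r -> s = 3 - r ->
  4^-1 * (1 + 2 * (- ((2 + s) * (1 - s)) / (2 - s)) + (1 - 2 * s ^+ 3 / (2 - s) ^+ 2))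
  + eps * (4^-1 * (1 - 2 * (- ((2 + s) * (1 - s)) / (2 - s)) + (1 - 2 * s ^+ 3 / (2 - s) ^+ 2)))
  = ((4 * eps + 5) * r - (12 * eps + 11)) / (2 * (1 + eps)).
Proof.
move=> r2 r_gt2 ->; have -> : eps = (r ^+ 2 - 5) / 4 by rewrite r2; field.
by field; apply/andP; split; apply/eqP; nra.
Qed.

Lemma violation_gap {R : realFieldType} {eps r : R} :
  r ^+ 2 = 4 * eps + 5 -> 2 < r -> r < 3 ->
  eps < ((4 * eps + 5) * r - (12 * eps + 11)) / (2 * (1 + eps)).
Proof.
move=> r2 r_gt2 r_lt3.
have gap : ((4 * eps + 5) * r - (12 * eps + 11)) / (2 * (1 + eps)) - eps
    = (3 - r) ^+ 3 / (4 * (r - 1)).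
  have -> : eps = (r ^+ 2 - 5) / 4 by rewrite r2; field.
  by field; apply/andP; split; apply/eqP; nra.
by rewrite -subr_gt0 gap; apply: divr_gt0; [apply: exprn_gt0 |]; lra.
Qed.

Section ResponseFunctions.
Context {R : realFieldType}.

Lemma bilinear_le_max_sub {e a b : R} :
  0 <= e -> e <= 1 -> 0 <= a <= 1 -> 0 <= b <= 1 ->
  (1 + e) * a * b - e * a - e * b <= Num.max (a - e) 0.
Proof.
move=> e0 e1 /andP[a0 a1] /andP[b0 b1].
have h1 : 0 <= e * a * (1 - b) by rewrite !mulr_ge0 // subr_ge0.
case: (lerP a e) => hae.
  rewrite max_r; last by rewrite subr_le0.
  have : 0 <= (e - a) * b by apply: mulr_ge0; lra.
  lra.
rewrite max_l; last by rewrite subr_ge0 ltW.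
have : 0 <= (a - e) * (1 - b) by apply: mulr_ge0; lra.
nra.
Qed.

Lemma min_le_chain (k A B U V : R) :
  0 <= A <= k -> 0 <= B <= k -> 0 <= U <= k -> 0 <= V <= k ->
  k * Num.min A B <= A * (k - U) + B * (k - V) + U * V.
Proof.
wlog AB : A B U V / A <= B.
  move=> hwlog hA hB hU hV; case/orP: (le_total A B) => hAB; first exact: hwlog.
  by rewrite minC [A * _ + _]addrC [U * V]mulrC; apply: hwlog.
move=> /andP[A0 Ak] /andP[B0 Bk] /andP[U0 Uk] /andP[V0 Vk].
rewrite min_l //.
have h1 : A * (k - V) <= B * (k - V) by apply: ler_wpM2r; lra.
suff : 0 <= A * (k - U - V) + U * V by lra.
case: (ltrP 0 k) => [k_gt0|k_le0]; last first.
  have -> : A = 0 by lra.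
  have -> : U = 0 by lra.
  by rewrite !mul0r addr0.
rewrite -(pmulr_rge0 _ k_gt0).
have -> : k * (A * (k - U - V) + U * V) = A * ((k - U) * (k - V)) + (k - A) * (U * V) by ring.
by apply: addr_ge0; apply: mulr_ge0; try apply: mulr_ge0; lra.
Qed.

Lemma max_sub_bounds {e x y : R} :
  e <= 1 -> x <= 1 -> 0 <= y -> `|x - y| <= e ->
  [/\ 0 <= Num.max (x - e) 0, Num.max (x - e) 0 <= y,
      Num.max (x - e) 0 <= 1 - e & 1 - e - Num.max (x - e) 0 <= 1 - x].
Proof.
rewrite ler_norml => e1 x1 y0 /andP[_ xy].
have : x - e <= Num.max (x - e) 0 by rewrite le_max lexx.
split; last lra.
- by rewrite le_max lexx orbT.
- by rewrite ge_max y0 andbT; lra.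
- by rewrite ge_max; apply/andP; split; lra.
Qed.

Lemma response_bound {e a p v z b q u w : R} :
  0 <= e -> e <= 1 ->
  0 <= a <= 1 -> 0 <= p <= 1 -> 0 <= v <= 1 -> 0 <= z <= 1 ->
  0 <= b <= 1 -> 0 <= q <= 1 -> 0 <= u <= 1 -> 0 <= w <= 1 ->
  `|a - p| <= e -> `|v - z| <= e -> `|b - q| <= e -> `|u - w| <= e ->
  (1 - e) * (a * b) + e * (1 - e) * ((1 - a) * (1 - b))
    - p * (1 - u) - (1 - v) * q - z * w <= e * (1 - e).
Proof.
move=> e0 e1 ha /andP[p0 _] /andP[_ v1] /andP[z0 _].
move=> hb /andP[q0 _] /andP[_ u1] /andP[w0 _] ap vz bq uw.
have [A0 Ap Ak uA] := max_sub_bounds e1 (proj2 (andP ha)) p0 ap.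
have [B0 Bq Bk vB] := max_sub_bounds e1 (proj2 (andP hb)) q0 bq.
have [U0 Uw Uk uU] := max_sub_bounds e1 u1 w0 uw.
have [V0 Vz Vk vV] := max_sub_bounds e1 v1 z0 vz.
set A := Num.max (a - e) 0 in A0 Ap Ak uA; set B := Num.max (b - e) 0 in B0 Bq Bk vB.
set U := Num.max (u - e) 0 in U0 Uw Uk uU; set V := Num.max (v - e) 0 in V0 Vz Vk vV.
have XAB : (1 + e) * a * b - e * a - e * b <= Num.min A B.
  by rewrite le_min bilinear_le_max_sub // mulrAC addrAC bilinear_le_max_sub.
have r1 : A * (1 - e - U) <= p * (1 - u) by apply: ler_pM; rewrite ?subr_ge0.
have r2 : B * (1 - e - V) <= (1 - v) * q by rewrite [_ * q]mulrC; apply: ler_pM; rewrite ?subr_ge0.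
have r3 : U * V <= z * w by rewrite mulrC; apply: ler_pM.
have := @min_le_chain (1 - e) A B U V.
rewrite A0 B0 U0 V0 Ak Bk Uk Vk => /(_ isT isT isT isT) chain.
have k0 : 0 <= 1 - e by rewrite subr_ge0.
have := ler_wpM2l k0 XAB.
lra.
Qed.

End ResponseFunctions.

Section ProbabilityIntegral.
Local Open Scope ereal_scope.
Context {d : measure_display} {L : measurableType d} {R : realType}.
Variable P : probability L R.

Lemma ge0_integral_EFinD (f g : L -> R) :
  (forall l, (0 <= f l)%R) -> (forall l, (0 <= g l)%R) ->
  measurable_fun setT f -> measurable_fun setT g ->
  \int[P]_l (f l + g l)%:E = \int[P]_l (f l)%:E + \int[P]_l (g l)%:E.
Proof.
move=> f0 g0 mf mg; under eq_integral => l _ do rewrite EFinD.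
apply: ge0_integralD => //.
- by move=> l _; rewrite lee_fin.
- exact/measurable_EFinP.
- by move=> l _; rewrite lee_fin.
- exact/measurable_EFinP.
Qed.

Lemma ge0_integral_EFinZl (c : R) (f : L -> R) :
  (0 <= c)%R -> (forall l, (0 <= f l)%R) -> measurable_fun setT f ->
  \int[P]_l (c * f l)%:E = c%:E * \int[P]_l (f l)%:E.
Proof.
move=> c0 f0 mf; under eq_integral => l _ do rewrite EFinM.
apply: ge0_integralZl => //.
- exact/measurable_EFinP.
- by move=> l _; rewrite lee_fin.
Qed.

Lemma probability_integral_cst (c : R) : \int[P]_l c%:E = c%:E.
Proof.
by rewrite integral_cst // -[RHS]mule1; congr (_ * _); apply: probability_setT.
Qed.

Lemma ge0_le_integral_EFin (f g : L -> R) :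
  (forall l, (0 <= f l)%R) -> (forall l, (f l <= g l)%R) ->
  measurable_fun setT f -> measurable_fun setT g ->
  \int[P]_l (f l)%:E <= \int[P]_l (g l)%:E.
Proof.
move=> f0 fg mf mg; apply: ge0_le_integral => //.
- by move=> l _; rewrite lee_fin.
- exact/measurable_EFinP.
- exact/measurable_EFinP.
- by move=> l _; rewrite lee_fin.
Qed.

Lemma bell_functional_mixture (eps : R) (f : bool -> bool -> bool -> bool -> L -> R)
    (p : bool -> bool -> bool -> bool -> R) :
  (0 <= eps <= 1)%R ->
  (forall a b x y l, 0 <= f a b x y l)%R ->
  (forall a b x y, measurable_fun setT (f a b x y)) ->
  (forall a b x y, (p a b x y)%:E = \int[P]_l (f a b x y l)%:E) ->
  (forall l, (1 - eps) * f false false false false l + eps * (1 - eps) * f true true false false l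
    <= eps * (1 - eps) + (f false true false true l
         + (f true false true false l + f false false true true l)))%R ->
  ((1 - eps) * p false false false false + eps * (1 - eps) * p true true false false
    - p false true false true - p true false true false - p false false true true
    <= eps * (1 - eps))%R.
Proof.
move=> /andP[e0 e1] f0 mf hp fle.
have k0 : (0 <= 1 - eps)%R by rewrite subr_ge0.
have ek : (0 <= eps * (1 - eps))%R by rewrite mulr_ge0.
pose F1 l := ((1 - eps) * f false false false false l + eps * (1 - eps) * f true true false false l)%R.
pose F2 l := (eps * (1 - eps) +
  (f false true false true l + (f true false true false l + f false false true true l)))%R.
have IF1 : \int[P]_l (F1 l)%:E =
    ((1 - eps) * p false false false false + eps * (1 - eps) * p true true false false)%:E.
  rewrite ge0_integral_EFinD ?ge0_integral_EFinZl -?hp -?EFinM -?EFinD //;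
    by [move=> l; rewrite mulr_ge0 | apply: measurable_funM].
have IF2 : \int[P]_l (F2 l)%:E = (eps * (1 - eps) +
    (p false true false true + (p true false true false + p false false true true)))%:E.
  rewrite ge0_integral_EFinD ?probability_integral_cst ?ge0_integral_EFinD -?hp -?EFinD //;
    by [move=> l; rewrite ?addr_ge0 | do 2?apply: measurable_funD].
have : \int[P]_l (F1 l)%:E <= \int[P]_l (F2 l)%:E.
  apply: ge0_le_integral_EFin fle _ _.
  - by move=> l; rewrite addr_ge0 // mulr_ge0.
  - by apply: measurable_funD; apply: measurable_funM.
  - by apply: measurable_funD => //; do 2?apply: measurable_funD.
by rewrite IF1 IF2 lee_fin; lra.
Qed.

End ProbabilityIntegral.

Lemma tv_dist_bool (R : numFieldType) (x y : R) :
  2^-1 * (`|x - y| + `|(1 - x) - (1 - y)|) = `|x - y|.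
Proof.
have -> : (1 - x) - (1 - y) = - (x - y) by ring.
by rewrite normrN; field.
Qed.

Lemma P2_bell_ineq {R : realType} {eps : R} {p : bool -> bool -> bool -> bool -> R} :
  0 <= eps -> eps <= 1 -> P2 eps eps p ->
  (1 - eps) * p false false false false + eps * (1 - eps) * p true true false false
    - p false true false true - p true false true false - p false false true true
    <= eps * (1 - eps).
Proof.
move=> e0 e1 [dd [L [q [pA [pB [mA [mB [A0 [A1 [B0 [B1 [sA [sB hp]]]]]]]]]]]]].
have At x y l : pA true x y l = 1 - pA false x y l by have := A1 x y l; lra.
have Bt x y l : pB true x y l = 1 - pB false x y l by have := B1 x y l; lra.
have Ab a x y l : 0 <= pA a x y l <= 1.
  by have := A1 x y l; have := A0 false x y l; have := A0 true x y l; case: a; lra.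
have Bb b x y l : 0 <= pB b x y l <= 1.
  by have := B1 x y l; have := B0 false x y l; have := B0 true x y l; case: b; lra.
have sA' x y y' l : `|pA false x y l - pA false x y' l| <= eps.
  by have := sA x y y' l; rewrite !At tv_dist_bool.
have sB' y x x' l : `|pB false x y l - pB false x' y l| <= eps.
  by have := sB y x x' l; rewrite !Bt tv_dist_bool.
apply: (bell_functional_mixture q eps (fun a b x y l => pA a x y l * pB b x y l) p _ _ _ hp).
- by rewrite e0.
- by move=> a b x y l; apply: mulr_ge0; [case/andP: (Ab a x y l) | case/andP: (Bb b x y l)].
- by move=> a b x y; apply: measurable_funM.
move=> l; rewrite !At !Bt.
have := response_bound e0 e1 (Ab false false false l) (Ab false false true l)
  (Ab false true false l) (Ab false true true l) (Bb false false false l)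
  (Bb false true false l) (Bb false false true l) (Bb false true true l)
  (sA' false false true l) (sA' true false true l) (sB' false false true l)
  (sB' true false true l).
lra.
Qed.

Theorem mainTheorem7 (R : realType) (eps : R) (heps0 : 0 <= eps) (heps1 : eps < 1) :
  let theta := asin (3 - Num.sqrt (4 * eps + 5)) in
  let s := sin theta in
  let psi : 'cV[R]_(2 * 2) :=
    cos (theta / 2) *: ket2 0 0 - sin (theta / 2) *: ket2 1 1 in
  let A0 : 'M[R]_2 :=
    (- ((2 + s) * Num.sqrt (1 - s)) / ((2 - s) * Num.sqrt (1 + s))) *: sigma_z
    - (Num.sqrt 2 * Num.sqrt s ^+ 3 / ((2 - s) * Num.sqrt (1 + s))) *: sigma_x in
  let A1 : 'M[R]_2 :=
    - Num.sqrt ((1 - s) / (1 + s)) *: sigma_z + Num.sqrt (2 * s / (1 + s)) *: sigma_x in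
  let A := fun x : bool => if x then A1 else A0 in
  let B := A in
  let p := born psi A B in
  [/\ p false true false true = 0, p true false true false = 0 & p false false true true = 0] /\
  [/\ p false false false false + eps * p true true false false
        = ((4 * eps + 5) * Num.sqrt (4 * eps + 5) - (12 * eps + 11)) / (2 * (1 + eps)),
      ((4 * eps + 5) * Num.sqrt (4 * eps + 5) - (12 * eps + 11)) / (2 * (1 + eps)) > eps,
      (1 - eps) * p false false false false + eps * (1 - eps) * p true true false false
        - p false true false true - p true false true false - p false false true true
        > eps * (1 - eps)
    & ~ P2 eps eps p].
Proof.
move=> theta s psi A0 A1 A B p.
set r := Num.sqrt (4 * eps + 5).
have r2 : r ^+ 2 = 4 * eps + 5 by rewrite sqr_sqrtr //; lra.
have r_ge0 : 0 <= r := sqrtr_ge0 _.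
have [r_gt2 r_lt3] : 2 < r /\ r < 3 by split; nra.
have r_asin : -1 <= 3 - r <= 1 by lra.
have s_r : s = 3 - r by have [] := asin_def r_asin.
have s_gt0 : 0 < s by lra.
have s_lt1 : s < 1 by lra.
have cos_theta : cos theta = Num.sqrt (1 - s ^+ 2) by rewrite s_r cos_asin.
have pE a b x y : p a b x y = schmidt_prob s a b x y.
  have AE z : A z = obs_z s z *: sigma_z + obs_x s z *: sigma_x.
    by case: z => //; rewrite /A /A0 /obs0_x scaleNr.
  by rewrite /p /born /B !AE expect_schmidt_angle cos_theta.
have value : p false false false false + eps * p true true false false
    = ((4 * eps + 5) * r - (12 * eps + 11)) / (2 * (1 + eps)).
  by rewrite !pE schmidt_prob0000_1100 // (violation_value r2 r_gt2 s_r).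
have zeros : [/\ p false true false true = 0, p true false true false = 0
                & p false false true true = 0].
  by rewrite !pE schmidt_prob0101 // schmidt_prob1010 // schmidt_prob0011.
have violation : eps * (1 - eps) < (1 - eps) * p false false false false
    + eps * (1 - eps) * p true true false false
    - p false true false true - p true false true false - p false false true true.
  case: zeros => -> -> ->; rewrite !subr0.
  have -> : (1 - eps) * p false false false false + eps * (1 - eps) * p true true false false
      = (1 - eps) * (p false false false false + eps * p true true false false) by ring.
  by rewrite value [eps * _]mulrC ltr_pM2l ?subr_gt0 // violation_gap.
split=> //; split=> //; first exact: violation_gap.
by move=> /(P2_bell_ineq heps0 (ltW heps1)); rewrite leNgt violation.
Qed.
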